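(* Let $G$ be a finite group with $|G|\ge3$ satisfying Property P. Then for every $S\in\mathcal B(G)$ with $\max\Delta(\mathsf L(S))\ge2$ there exists $T\in\mathcal B(G)$ with $|T|<|S|$ and $\max\Delta(\mathsf L(T))\ge\max\Delta(\mathsf L(S))-1$.
   Context: For a finite group $G$ (multiplicative, identity $1_G$), $\mathcal F(G)$ is the free abelian monoid with basis $G$ (sequences $S=g_1\boldsymbol{\cdot}\ldots\boldsymbol{\cdot}g_\ell$, operation $\boldsymbol{\cdot}$, length $|S|=\ell$). $\pi(S)=\{g_{\tau(1)}\cdots g_{\tau(\ell)}:\tau\text{ a permutation of }[1,\ell]\}$, $\mathcal B(G)=\{S\in\mathcal F(G):1_G\in\pi(S)\}$, $\mathcal A(G)$ its set of atoms. For $A\in\mathcal B(G)$, $\mathsf L(A)=\{k\in\mathbb N: A=U_1\boldsymbol{\cdot}\ldots\boldsymbol{\cdot}U_k \text{ with } U_i\in\mathcal A(G)\}$ (and $\mathsf L(1_{\mathcal F(G)})=\{0\}$). For a finite set $L=\{m_1<\dots<m_k\}\subset\mathbb Z$, $\Delta(L)=\{m_i-m_{i-1}:i\in[2,k]\}$. $G$ satisfies Property P if: whenever $U=g_1\boldsymbol{\cdot}\ldots\boldsymbol{\cdot}g_\ell\in\mathcal A(G)$ and $g_1=h_1h_2$ with $h_1,h_2\in G$, the sequence $h_1\boldsymbol{\cdot}h_2\boldsymbol{\cdot}g_2\boldsymbol{\cdot}\ldots\boldsymbol{\cdot}g_\ell$ is either an atom or a product of two atoms of $\mathcal B(G)$.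 *)

(* The finite group G is the whole finGroupType gT.
   Sequences over G (elements of the free abelian monoid F(G)) are
   represented by lists [seq gT], considered up to permutation (perm_eq). *)
From mathcomp Require Import all_boot all_fingroup.
Set Implicit Arguments. Unset Strict Implicit. Unset Printing Implicit Defensive.
Local Open Scope group_scope.

Definition prod_one (gT : finGroupType) (S : seq gT) : Prop :=
  exists t : seq gT, perm_eq S t /\ \prod_(g <- t) g = 1.

Definition atom (gT : finGroupType) (U : seq gT) : Prop :=
  prod_one U /\ U <> [::] /\
  forall V W : seq gT, perm_eq U (V ++ W) -> prod_one V -> prod_one W ->
    V = [::] \/ W = [::].

Definition in_L (gT : finGroupType) (A : seq gT) (k : nat) : Prop :=
  exists fs : seq (seq gT),
    size fs = k /\ (forall U, U \in fs -> atom U) /\ perm_eq A (flatten fs).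

Definition in_Delta (gT : finGroupType) (A : seq gT) (d : nat) : Prop :=
  exists m m' : nat, (m < m')%N /\ in_L A m /\ in_L A m' /\
    (forall k, (m < k < m')%N -> ~ in_L A k) /\ d = (m' - m)%N.

Definition is_max_Delta (gT : finGroupType) (A : seq gT) (d : nat) : Prop :=
  in_Delta A d /\ forall d', in_Delta A d' -> (d' <= d)%N.

Definition propertyP (gT : finGroupType) : Prop :=
  forall (U : seq gT) (g1 : gT) (rest : seq gT) (h1 h2 : gT),
    atom U -> perm_eq U (g1 :: rest) -> g1 = h1 * h2 ->
    atom [:: h1, h2 & rest] \/
    exists V W : seq gT, atom V /\ atom W /\ perm_eq [:: h1, h2 & rest] (V ++ W).

From mathcomp Require Import all_boot all_fingroup.
From mathcomp Require Import zify boolp.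
Set Implicit Arguments. Unset Strict Implicit. Unset Printing Implicit Defensive.
Local Open Scope group_scope.

(* Factor S into m atoms U_i and into m' = m + d atoms V_j.  As m < m', some U_i,
   listed in an order with product 1, has two adjacent terms h1, h2 lying in
   different V_j; let T be S with h1, h2 replaced by h1 h2.  Merging adjacent
   terms of such an ordering keeps U_i an atom, so m is in L(T); the two V_j
   containing h1 and h2 fuse into one product-one sequence, so L(T) also has an
   element >= m' - 1.  By Property P every k in L(T) has k or k + 1 in L(S), so
   L(T) has no element strictly between m and m' - 1: a gap of at least d - 1. *)

Lemma exists_max_nat (P : nat -> Prop) b :
  (exists n, P n) -> (forall n, P n -> n <= b) ->
  exists2 k, P k & forall n, P n -> n <= k.
Proof.
move=> [n Pn] ubP.
have exP : exists n, `[< P n >] by exists n; apply: asboolT.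
have ubP' i : `[< P i >] -> i <= b by move/asboolP/ubP.
have [k /asboolP Pk max_k] := ex_maxnP exP ubP'.
by exists k => // i /asboolT /max_k.
Qed.

Lemma exists_min_nat (P : nat -> Prop) : (exists n, P n) ->
  exists2 k, P k & forall n, P n -> k <= n.
Proof.
move=> [n Pn]; have exP : exists n, `[< P n >] by exists n; apply: asboolT.
have [k /asboolP Pk min_k] := ex_minnP exP.
by exists k => // i /asboolT /min_k.
Qed.

Section Separation.

Variable T : eqType.
Implicit Types (ts zs : seq (seq T)) (a b : T).

Definition separated zs a b : Prop :=
  exists i j, [/\ i != j, a \in nth [::] zs i & b \in nth [::] zs j].

Lemma count_nonempty_le_size_flatten zs :
  count (predC1 [::]) zs <= size (flatten zs).
Proof.
by elim: zs => [|[|x z] zs IH] //=; rewrite size_cat add1n ltnS (leq_trans IH) ?leq_addl.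
Qed.

Lemma perm_flatten_set_nth_rem zs i a : i < size zs -> a \in nth [::] zs i ->
  perm_eq (flatten zs) (a :: flatten (set_nth [::] zs i (rem a (nth [::] zs i)))).
Proof.
elim: zs i => [|W zs IH] [|i] //= lt_i a_in.
  by rewrite -cat_cons perm_cat2r perm_to_rem.
by rewrite perm_sym -cat1s perm_catCA /= perm_cat2l perm_sym IH.
Qed.

Lemma separated_set_nth_rem zs i a x y :
  separated (set_nth [::] zs i (rem a (nth [::] zs i))) x y -> separated zs x y.
Proof.
have sub k z : z \in nth [::] (set_nth [::] zs i (rem a (nth [::] zs i))) k ->
    z \in nth [::] zs k.
  by rewrite nth_set_nth /=; case: eqP => [->|//]; apply: mem_rem.
by move=> [k [l [ne_kl x_k y_l]]]; exists k, l; split; rewrite ?sub.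
Qed.

(* Each element of [ts] is peeled off the block of [zs] containing it; a block
   emptied in the middle of some [t] would separate two adjacent terms of [t]. *)
Lemma count_nonempty_le_unseparated ts zs :
  perm_eq (flatten ts) (flatten zs) ->
  (forall t a b, t \in ts -> infix [:: a; b] t -> ~ separated zs a b) ->
  count (predC1 [::]) zs <= count (predC1 [::]) ts.
Proof.
elim: ts zs => [|t ts IHts] zs.
  by move=> /perm_size /= size0 _; rewrite size0 count_nonempty_le_size_flatten.
elim: t zs => [|a t IHt] zs flat_eq unsep /=.
  rewrite add0n; apply: IHts => // t' a b t'_ts; apply: unsep.
  by rewrite inE t'_ts orbT.
have [W W_zs a_W] : exists2 W, W \in zs & a \in W.
  by apply/flattenP; rewrite -(perm_mem flat_eq) mem_head.
set i := index W zs.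
have lt_i : i < size zs by rewrite index_mem.
have nth_i : nth [::] zs i = W by rewrite nth_index.
set zn := set_nth [::] zs i (rem a W).
have flat_zn : perm_eq (flatten zs) (a :: flatten zn).
  by rewrite /zn -nth_i perm_flatten_set_nth_rem ?nth_i.
have sep_zn x y : separated zn x y -> separated zs x y.
  by rewrite /zn -nth_i; apply: separated_set_nth_rem.
have flat_tzn : perm_eq (flatten (t :: ts)) (flatten zn).
  by rewrite -(perm_cons a) (perm_trans flat_eq).
have IH : count (predC1 [::]) zn <= count (predC1 [::]) (t :: ts).
  apply: IHt => // t' c e; rewrite inE => /orP [/eqP -> ce_t | t'_ts ce_t'] /sep_zn.
    by apply: unsep (mem_head _ _) _; rewrite infix_consl ce_t orbT.
  by apply: unsep ce_t'; rewrite inE t'_ts orbT.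
have count_zn : count (predC1 [::]) zn =
    (count (predC1 [::]) zs + (rem a W != [::])).-1.
  rewrite count_set_nth_ltn // nth_i /=; have -> : (W != [::]) by case: (W) a_W.
  by rewrite subn1.
have zs_gt0 : 0 < count (predC1 [::]) zs.
  by rewrite -has_count; apply/hasP; exists W => //=; case: (W) a_W.
have [remW0 | remW_ne] := eqVneq (rem a W) [::]; last first.
  move: IH; rewrite count_zn remW_ne addn1 /= => IH.
  by rewrite (leq_trans IH) // leq_add2r leq_b1.
move: count_zn IH; rewrite remW0 eqxx addn0 => ->.
case: t {IHt flat_eq} => [|b t] in flat_tzn unsep * => /=; first by lia.
exfalso.
have [j lt_j b_j] : exists2 j, j < size zn & b \in nth [::] zn j.
  have /flattenP [W' W'_zn b_W'] : b \in flatten zn by rewrite -(perm_mem flat_tzn) mem_head.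
  by exists (index W' zn); rewrite ?index_mem ?nth_index.
have ne_ij : i != j.
  by apply: contraTneq b_j => <-; rewrite nth_set_nth /= eqxx remW0.
apply: (unsep _ a b (mem_head _ _) (prefix_infix [:: a; b] t)).
exists i, j; split; rewrite ?nth_i //.
by move: b_j; rewrite nth_set_nth /= eq_sym (negbTE ne_ij).
Qed.

Lemma exists_separated_adjacent ts zs :
  perm_eq (flatten ts) (flatten zs) -> [::] \notin zs -> size ts < size zs ->
  exists t a b, [/\ t \in ts, infix [:: a; b] t & separated zs a b].
Proof.
move=> flat_eq nil_zs lt_ts_zs; apply: contrapT => no_sep.
have count_zs : count (predC1 [::]) zs = size zs.
  apply/eqP; rewrite -all_count; apply/allP => z z_zs /=.
  by apply: contraNneq nil_zs => <-.
have : size zs <= count (predC1 [::]) ts.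
  rewrite -count_zs; apply: count_nonempty_le_unseparated flat_eq _.
  by move=> t a b t_ts ab_t sep_ab; apply: no_sep; exists t, a, b.
by move/leq_trans/(_ (count_size _ _)); rewrite leqNgt lt_ts_zs.
Qed.

Lemma perm_nth2 (x0 : T) (s : seq T) i j : i != j -> i < size s -> j < size s ->
  exists rest, perm_eq s [:: nth x0 s i, nth x0 s j & rest].
Proof.
move=> ne_ij lt_i lt_j.
set r := [seq k <- iota 0 (size s) | (k != i) && (k != j)].
have iota_ijr : perm_eq (iota 0 (size s)) [:: i, j & r].
  apply: uniq_perm; first exact: iota_uniq.
    by rewrite /= !inE /r !mem_filter (negbTE ne_ij) !eqxx /= andbF filter_uniq ?iota_uniq.
  move=> k; rewrite !inE /r mem_filter mem_iota add0n.
  have [->|_] := eqVneq k i; first by rewrite lt_i.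
  by have [->|_] := eqVneq k j; rewrite ?lt_j.
exists (map (nth x0 s) r).
by have := perm_map (nth x0 s) iota_ijr; rewrite -/(mkseq _ _) mkseq_nth.
Qed.

End Separation.

Section Factorizations.

Variable gT : finGroupType.
Implicit Types (A B R U V W u : seq gT) (fs ts : seq (seq gT)) (x h : gT).

Lemma prod_one_perm A B : perm_eq A B -> prod_one A -> prod_one B.
Proof. by move=> AB [t [At prod_t]]; exists t; rewrite (perm_trans _ At) 1?perm_sym. Qed.

Lemma prod_one_cat A B : prod_one A -> prod_one B -> prod_one (A ++ B).
Proof.
move=> [a [Aa prod_a]] [b [Bb prod_b]]; exists (a ++ b).
by rewrite perm_cat // big_cat /= prod_a prod_b mulg1.
Qed.

Lemma prod_one_flatten fs : (forall U, U \in fs -> prod_one U) -> prod_one (flatten fs).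
Proof.
elim: fs => [|U fs IH] prod_fs /=; first by exists [::]; rewrite big_nil.
apply: prod_one_cat; first by apply: prod_fs; rewrite mem_head.
by apply: IH => V V_fs; apply: prod_fs; rewrite inE V_fs orbT.
Qed.

Lemma prod_one_perm_head W x : prod_one W -> x \in W ->
  exists2 w, perm_eq W (x :: w) & x * \prod_(y <- w) y = 1.
Proof.
move=> [t [Wt prod_t]] x_W; have x_t : x \in t by rewrite -(perm_mem Wt).
move: Wt prod_t; case/splitPr: x_t => t1 t2 Wt prod_t.
exists (t2 ++ t1).
  by rewrite (perm_trans Wt) // -cat1s perm_catCA perm_cons perm_catC.
move: prod_t; rewrite big_cat big_cons big_cat mulgA => /mulg1_eq <-.
by rewrite mulVg.
Qed.

Lemma prod_one_expand h1 h2 R : prod_one (h1 * h2 :: R) -> prod_one [:: h1, h2 & R].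
Proof.
move=> /prod_one_perm_head /(_ (mem_head _ _)) [w Rw prod_w].
exists [:: h1, h2 & w]; split; first by rewrite !perm_cons -(perm_cons (h1 * h2)).
by rewrite !big_cons mulgA.
Qed.

Lemma atom_perm A B : perm_eq A B -> atom A -> atom B.
Proof.
move=> AB [prod_A [A_nil A_irr]]; split; first exact: prod_one_perm prod_A.
split=> [B_nil|V W BVW]; last by apply: A_irr; rewrite (perm_trans AB).
by move: AB; rewrite B_nil => /perm_nilP.
Qed.

(* A splitting of the merged sequence lifts, by [prod_one_expand], to a
   splitting of the original atom. *)
Lemma atom_merge u1 u2 h1 h2 :
  atom (u1 ++ [:: h1, h2 & u2]) -> \prod_(x <- u1 ++ [:: h1, h2 & u2]) x = 1 ->
  atom (h1 * h2 :: u1 ++ u2).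
Proof.
move=> [_ [_ irr]] prod_u.
have u_perm : perm_eq (u1 ++ [:: h1, h2 & u2]) [:: h1, h2 & u1 ++ u2].
  by rewrite -[[:: h1, h2 & u2]]/([:: h1; h2] ++ u2) perm_catCA.
have merged_in_V V W : perm_eq (h1 * h2 :: u1 ++ u2) (V ++ W) -> h1 * h2 \in V ->
    prod_one V -> prod_one W -> W = [::].
  move=> VW h12_V prod_V prod_W.
  have V_rem := perm_to_rem h12_V.
  have split_V : prod_one [:: h1, h2 & rem (h1 * h2) V].
    exact/prod_one_expand/(prod_one_perm V_rem).
  have u_split : perm_eq (u1 ++ [:: h1, h2 & u2]) ([:: h1, h2 & rem (h1 * h2) V] ++ W).
    rewrite (perm_trans u_perm) //= !perm_cons -(perm_cons (h1 * h2)).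
    by rewrite (perm_trans VW) // -cat_cons perm_cat2r.
  by case: (irr _ _ u_split split_V prod_W).
split.
  exists (u1 ++ h1 * h2 :: u2); split; first by rewrite -cat1s perm_catCA.
  by rewrite big_cat big_cons /= -mulgA; move: prod_u; rewrite big_cat !big_cons.
split=> // V W VW prod_V prod_W.
have : h1 * h2 \in V ++ W by rewrite -(perm_mem VW) mem_head.
rewrite mem_cat => /orP [h12_V | h12_W]; first by right; exact: merged_in_V h12_V _ _.
by left; apply: merged_in_V h12_W _ _; rewrite // (perm_trans VW) // perm_catC.
Qed.

Lemma in_L_perm A B k : perm_eq A B -> in_L A k -> in_L B k.
Proof.
by move=> AB [fs [size_fs [atoms_fs A_fs]]]; exists fs; rewrite (perm_trans _ A_fs) 1?perm_sym.
Qed.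

Lemma in_L_atoms fs : (forall U, U \in fs -> atom U) -> in_L (flatten fs) (size fs).
Proof. by move=> atoms_fs; exists fs. Qed.

Lemma in_L_atom U : atom U -> in_L U 1.
Proof.
move=> atom_U; exists [:: U]; rewrite /= cats0.
by split=> //; split=> // V; rewrite inE => /eqP->.
Qed.

Lemma in_L_cat A B k l : in_L A k -> in_L B l -> in_L (A ++ B) (k + l).
Proof.
move=> [fs [<- [atoms_fs A_fs]]] [gs [<- [atoms_gs B_gs]]].
exists (fs ++ gs); rewrite size_cat flatten_cat perm_cat //; do 2!split=> //; move=> U.
by rewrite mem_cat => /orP [/atoms_fs | /atoms_gs].
Qed.

Lemma in_L_prod_one A k : in_L A k -> prod_one A.
Proof.
move=> [fs [_ [atoms_fs A_fs]]]; rewrite perm_sym in A_fs.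
by apply: prod_one_perm A_fs _; apply: prod_one_flatten => U /atoms_fs [].
Qed.

Lemma in_L_le_size A k : in_L A k -> k <= size A.
Proof.
move=> [fs [<- [atoms_fs A_fs]]]; rewrite (perm_size A_fs).
elim: fs atoms_fs {A_fs} => [|U fs IH] //= atoms_fs; rewrite size_cat.
have [_ [U_nil _]] := atoms_fs U (mem_head _ _).
have := IH (fun V V_fs => atoms_fs V (@mem_behead _ (U :: fs) _ V_fs)).
by case: (U) U_nil => //= x U' _; lia.
Qed.

Lemma in_L_gt0 A k : in_L A k -> A != [::] -> 0 < k.
Proof.
by move=> [[|U fs] [<- [_ A_fs]]] //; move/perm_nilP: A_fs => ->.
Qed.

Lemma prod_one_in_L A : prod_one A -> exists k, in_L A k.
Proof.
move: {2}(size A) (leqnn (size A)) => n; elim: n A => [|n IH] A size_A prod_A.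
  by exists 0, [::]; case: A size_A {prod_A}.
have [A_nil | A_ne] := eqVneq A [::]; first by exists 0, [::]; rewrite A_nil.
have [atom_A | not_atom] := pselect (atom A); first by exists 1%N; exact: in_L_atom.
have [V [W [AVW prod_V prod_W V_ne W_ne]]] :
    exists V W, [/\ perm_eq A (V ++ W), prod_one V, prod_one W, V != [::] & W != [::]].
  apply: contrapT => no_split; apply: not_atom; do 2!split=> //; first exact/eqP.
  move=> V W AVW prod_V prod_W; apply: contrapT => /not_orP [/eqP V_ne /eqP W_ne].
  by apply: no_split; exists V, W.
rewrite (perm_size AVW) size_cat in size_A.
have [|k L_V] := IH V _ prod_V.
  by rewrite -ltnS (leq_trans _ size_A) // -addn1 leq_add2l lt0n size_eq0.
have [|l L_W] := IH W _ prod_W.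
  by rewrite -ltnS (leq_trans _ size_A) // -add1n leq_add2r lt0n size_eq0.
by exists (k + l); rewrite perm_sym in AVW; apply: in_L_perm AVW (in_L_cat L_V L_W).
Qed.

Lemma in_L_ordered A k : in_L A k -> exists ts, [/\ size ts = k, perm_eq A (flatten ts)
  & forall u, u \in ts -> atom u /\ \prod_(x <- u) x = 1].
Proof.
move=> [fs [<- [atoms_fs A_fs]]].
suff [ts [size_ts fs_ts ord_ts]] : exists ts, [/\ size ts = size fs,
    perm_eq (flatten fs) (flatten ts) & forall u, u \in ts -> atom u /\ \prod_(x <- u) x = 1].
  by exists ts; rewrite (perm_trans A_fs).
elim: fs atoms_fs {A_fs} => [|U fs IH] atoms_fs; first by exists [::].
have [|ts [size_ts fs_ts ord_ts]] := IH.
  by move=> V V_fs; apply: atoms_fs; rewrite inE V_fs orbT.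
have atom_U := atoms_fs U (mem_head _ _).
have [t [Ut prod_t]] := atom_U.1.
exists (t :: ts); split; rewrite /= ?size_ts ?perm_cat //.
move=> u; rewrite inE => /orP [/eqP -> | /ord_ts //].
by split=> //; apply: atom_perm Ut atom_U.
Qed.

End Factorizations.

Section Merging.

Variable gT : finGroupType.
Implicit Types (R U W : seq gT) (ts zs : seq (seq gT)) (h : gT).

Lemma in_L_split h1 h2 R j : propertyP gT -> in_L (h1 * h2 :: R) j ->
  in_L [:: h1, h2 & R] j \/ in_L [:: h1, h2 & R] j.+1.
Proof.
move=> hP [fs [<- [atoms_fs R_fs]]].
have [W W_fs h12_W] : exists2 W, W \in fs & h1 * h2 \in W.
  by apply/flattenP; rewrite -(perm_mem R_fs) mem_head.
have W_rem := perm_to_rem h12_W.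
have R_split : perm_eq ([:: h1, h2 & rem (h1 * h2) W] ++ flatten (rem W fs)) [:: h1, h2 & R].
  rewrite /= !perm_cons -(perm_cons (h1 * h2)) perm_sym (perm_trans R_fs) //.
  by rewrite (perm_trans (perm_flatten (perm_to_rem W_fs))) //= -cat_cons perm_cat2r.
have L_rest : in_L (flatten (rem W fs)) (size (rem W fs)).
  by apply: in_L_atoms => U /mem_rem; apply: atoms_fs.
have size_rest : (size (rem W fs)).+1 = size fs.
  by rewrite size_rem // prednK //; case: (fs) W_fs.
have [atom_split | [V [V' [atom_V [atom_V' split_VV']]]]] :=
  hP W _ _ h1 h2 (atoms_fs W W_fs) W_rem erefl.
  left; rewrite -size_rest; apply: in_L_perm R_split _.
  exact: (in_L_cat (in_L_atom atom_split) L_rest).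
right; rewrite -size_rest; apply: in_L_perm R_split _.
apply: (in_L_cat (k := 2)) L_rest; rewrite perm_sym in split_VV'.
exact: in_L_perm split_VV' (in_L_cat (in_L_atom atom_V) (in_L_atom atom_V')).
Qed.

Lemma in_L_merge_adjacent ts u h1 h2 :
  (forall U, U \in ts -> atom U) -> u \in ts -> infix [:: h1; h2] u ->
  \prod_(x <- u) x = 1 ->
  exists R, perm_eq (flatten ts) [:: h1, h2 & R] /\ in_L (h1 * h2 :: R) (size ts).
Proof.
move=> atoms_ts u_ts /infixP [u1 [u2 u_eq]] prod_u.
set F := flatten (rem u ts).
exists (u1 ++ u2 ++ F); split.
  rewrite (perm_trans (perm_flatten (perm_to_rem u_ts))) //= -/F u_eq.
  by rewrite -!catA perm_catCA.
have atom_merged : atom (h1 * h2 :: u1 ++ u2).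
  by apply: atom_merge; rewrite -?u_eq //; apply: atoms_ts.
have L_rest : in_L F (size (rem u ts)).
  by apply: in_L_atoms => U /mem_rem; apply: atoms_ts.
have -> : size ts = 1 + size (rem u ts).
  by rewrite size_rem // add1n prednK //; case: (ts) u_ts.
by rewrite catA; apply: (in_L_cat (in_L_atom atom_merged) L_rest).
Qed.

Lemma in_L_merge_separated zs h1 h2 R :
  (forall U, U \in zs -> atom U) -> separated zs h1 h2 ->
  perm_eq (flatten zs) [:: h1, h2 & R] ->
  exists2 k, in_L (h1 * h2 :: R) k & (size zs).-1 <= k.
Proof.
move=> atoms_zs [i [j [ne_ij h1_i h2_j]]] zs_R.
have lt_i : i < size zs by case: ltnP h1_i => // /(nth_default [::]) ->.
have lt_j : j < size zs by case: ltnP h2_j => // /(nth_default [::]) ->.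
have [rest zs_rest] := perm_nth2 [::] ne_ij lt_i lt_j.
have [w1 W1_w1 prod_w1] := prod_one_perm_head (atoms_zs _ (mem_nth [::] lt_i)).1 h1_i.
have [w2 W2_w2 prod_w2] := prod_one_perm_head (atoms_zs _ (mem_nth [::] lt_j)).1 h2_j.
have prod_merged : prod_one (h1 * h2 :: w1 ++ w2).
  exists (w1 ++ h1 * h2 :: w2); split; first by rewrite -cat1s perm_catCA.
  by rewrite big_cat big_cons /= -(mulg1_eq prod_w1) -!mulgA mulKg.
have [k L_k] := prod_one_in_L prod_merged.
have L_rest : in_L (flatten rest) (size rest).
  by apply: in_L_atoms => U U_rest; apply: atoms_zs; rewrite (perm_mem zs_rest) !inE U_rest !orbT.
exists (k + size rest); last first.
  have k_gt0 := in_L_gt0 L_k isT.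
  by rewrite (perm_size zs_rest) /=; lia.
apply: in_L_perm (in_L_cat L_k L_rest); rewrite /= perm_cons.
rewrite -(perm_cons h2) -(perm_cons h1) perm_sym -(permPl zs_R).
rewrite (permPl (perm_flatten zs_rest)) /= (permPl (perm_cat W1_w1 (perm_cat W2_w2 (perm_refl _)))).
by rewrite /= perm_cons -catA -cat1s perm_catCA.
Qed.

End Merging.

Section LengthSets.

Variable gT : finGroupType.
Implicit Types (A : seq gT).

Lemma in_Delta_le_size A e : in_Delta A e -> e <= size A.
Proof.
by move=> [m [m' [_ [_ [L_m' [_ ->]]]]]]; rewrite (leq_trans (leq_subr _ _)) ?in_L_le_size.
Qed.

Lemma is_max_Delta_ge A e : in_Delta A e -> exists2 d, is_max_Delta A d & e <= d.
Proof.
move=> D_e; have [d D_d max_d] := exists_max_nat (ex_intro _ e D_e) (@in_Delta_le_size A).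
by exists d; rewrite ?max_d.
Qed.

Lemma in_Delta_of_gap A lo hi : lo < hi ->
  (exists2 x, in_L A x & x <= lo) -> (exists2 y, in_L A y & hi <= y) ->
  (forall x, lo < x < hi -> ~ in_L A x) ->
  exists2 e, in_Delta A e & hi - lo <= e.
Proof.
move=> lt_lo_hi [x L_x le_x] [y L_y le_y] gap.
have [a [L_a le_a] max_a] := exists_max_nat (P := fun n => in_L A n /\ n <= lo)
  (ex_intro _ x (conj L_x le_x)) (fun n => @proj2 _ _).
have [b [L_b le_b] min_b] := exists_min_nat (P := fun n => in_L A n /\ hi <= n)
  (ex_intro _ y (conj L_y le_y)).
exists (b - a); last by lia.
exists a, b; split; first by lia.
do 3!split=> //; move=> n /andP [lt_a lt_b] L_n.
case: (leqP n lo) => [le_n | lt_n]; first by have := max_a n (conj L_n le_n); lia.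
case: (leqP hi n) => [le_n | lt_n']; first by have := min_b n (conj L_n le_n); lia.
by apply: (gap n) => //; rewrite lt_n.
Qed.

End LengthSets.

Theorem lemma5p4 (gT : finGroupType) :
  (3 <= #|gT|)%N -> propertyP gT ->
  forall (S : seq gT) (d : nat), prod_one S -> is_max_Delta S d -> (2 <= d)%N ->
  exists (T : seq gT) (d' : nat),
    prod_one T /\ (size T < size S)%N /\ is_max_Delta T d' /\ (d - 1 <= d')%N.
Proof.
move=> _ hP S d _ [[m [m' [lt_mm' [L_m [L_m' [gap ->]]]]]] _] d_ge2.
have [ts [size_ts S_ts ordered_ts]] := in_L_ordered L_m.
have [zs [size_zs [atoms_zs S_zs]]] := L_m'.
have atoms_ts U : U \in ts -> atom U by move/ordered_ts => [].
have [u [h1 [h2 [u_ts h12_u sep_h12]]]] :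
    exists u h1 h2, [/\ u \in ts, infix [:: h1; h2] u & separated zs h1 h2].
  apply: exists_separated_adjacent; first by rewrite -(permPl S_ts).
    by apply/negP => /atoms_zs [_ []].
  by rewrite size_ts size_zs.
have [R [ts_R]] := in_L_merge_adjacent atoms_ts u_ts h12_u (ordered_ts u u_ts).2.
rewrite size_ts => L_T_m.
have S_R : perm_eq S [:: h1, h2 & R] by rewrite (permPl S_ts).
have [k L_T_k le_k] : exists2 k, in_L (h1 * h2 :: R) k & m'.-1 <= k.
  rewrite -size_zs; apply: in_L_merge_separated atoms_zs sep_h12 _.
  by rewrite -(permPl S_zs).
have gap_T x : m < x < m'.-1 -> ~ in_L (h1 * h2 :: R) x.
  move=> /andP [lt_m lt_m'] /(in_L_split hP); rewrite perm_sym in S_R.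
  by case=> /(in_L_perm S_R); apply: gap; apply/andP; lia.
have [|e D_e le_e] := in_Delta_of_gap _ (ex_intro2 _ _ m L_T_m (leqnn m))
  (ex_intro2 _ _ k L_T_k le_k) gap_T; first by lia.
have [d' max_d' le_d'] := is_max_Delta_ge D_e.
exists (h1 * h2 :: R), d'; split; first exact: in_L_prod_one L_T_m.
by rewrite (perm_size S_R); split=> //; split=> //; lia.
Qed.
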